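(* There exists a constant $C>0$ depending only on $h$ such that for all $\delta\in(-1,1)$ and all $x\in[0,1]^2$, $$|\Psi_\delta(x)-x|\le C|\delta|\,\tilde d(x),$$ where $\tilde d(x)$ denotes the distance from $x$ to the set of corners of $[0,1]^2$.
   Context: Fix a function $h:[0,\tfrac12)\to[0,\infty)$ which is weakly increasing, satisfies $h(r)=0$ for all $r\le\frac1{10}$, $h(r)\to\infty$ as $r\to\frac12$, and is thrice continuously differentiable with $(h'(r))^2=O((r+h(r))^3)$, $h''(r)h'(r)=O((r+h(r))^3)$, $h'''(r)=O((r+h(r))^2)$. Let $r_0\in(0,\frac12)$ be the unique solution of $2r_0h(r_0)+r_0^2=\frac14$, and define $\Theta(r)=\arccos\frac{h(r)}{h(r)+r}$ for $r\le r_0$ and $\Theta(r)=\arcsin\frac{1}{2(h(r)+r)}$ for $r>r_0$. The map $(r,\theta)\mapsto(x_1,x_2)$, $x_1=\frac12+(r+h(r))\sin(\theta\Theta(r))$, $x_2=(r+h(r))\cos(\theta\Theta(r))-h(r)$, is a bijection from $(0,\frac12)\times[-1,1]$ onto $[0,1]\times[0,\frac12)\setminus\{(\frac12,0)\}$; let $K$ denote its inverse. For $\delta\in(-1,1)$ and $r\in(0,\frac12)$, let $w_r(\theta)=1+h'(r)-h'(r)\cos(\theta\Theta(r))$ and let $g_r=g_{r,\delta}:[-1,1]\to[-1,1]$ be the unique increasing bijection with $(1+\delta)\int_{-1}^{\ell}w_r(\theta)\,d\theta=\int_{-1}^{g_r(\ell)}w_r(\theta)\,d\theta$ for $\ell\in[-1,0]$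 and $(1-\delta)\int_{\ell}^{1}w_r(\theta)\,d\theta=\int_{g_r(\ell)}^{1}w_r(\theta)\,d\theta$ for $\ell\in[0,1]$. Define $\Psi_\delta:[0,1]^2\to[0,1]^2$ by: $\Psi_\delta(x)=K^{-1}(r,g_r(\theta))$ where $(r,\theta)=K(x)$, for $x\in[0,1]\times[0,\frac12)\setminus\{(\frac12,0)\}$; $\Psi_\delta(\frac12,0)=(\frac12,0)$; for $x_2>\frac12$, $\Psi_\delta(x_1,x_2)=(\Psi^1_\delta(x_1,1-x_2),\,1-\Psi^2_\delta(x_1,1-x_2))$ where $\Psi_\delta=(\Psi^1_\delta,\Psi^2_\delta)$; and on $x_2=\frac12$, $\Psi_\delta(x_1,\frac12)=((1+\delta)x_1,\frac12)$ for $x_1\le\frac12$ and $\Psi_\delta(x_1,\frac12)=(\frac{1+\delta}2+(1-\delta)(x_1-\frac12),\frac12)$ for $x_1\ge\frac12$. *)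

From Stdlib Require Import Reals Lra ClassicalEpsilon.
Open Scope R_scope.

(* Riemann integral of f over [a,b] (0 if not integrable; the value of
   RiemannInt does not depend on the integrability proof). *)
Definition Rint (f : R -> R) (a b : R) : R :=
  match excluded_middle_informative (inhabited (Riemann_integrable f a b)) with
  | left H => RiemannInt (epsilon H (fun _ => True))
  | right _ => 0
  end.

Definition r0 (h : R -> R) : R :=
  epsilon (inhabits 0)
    (fun r => 0 < r < 1/2 /\ 2 * r * h r + r ^ 2 = 1/4).

Definition Theta (h : R -> R) (r : R) : R :=
  if Rle_dec r (r0 h) then acos (h r / (h r + r))
  else asin (1 / (2 * (h r + r))).

Definition Phi (h : R -> R) (p : R * R) : R * R :=
  let r := fst p in let th := snd p in
  (1/2 + (r + h r) * sin (th * Theta h r),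
   (r + h r) * cos (th * Theta h r) - h r).

Definition K (h : R -> R) (x : R * R) : R * R :=
  epsilon (inhabits (0, 0))
    (fun p => 0 < fst p < 1/2 /\ -1 <= snd p <= 1 /\ Phi h p = x).

(* weight w_r(theta) = 1 + h'(r) - h'(r) cos(theta Theta(r)); h1 = h' *)
Definition w (h h1 : R -> R) (r th : R) : R :=
  1 + h1 r - h1 r * cos (th * Theta h r).

Definition g (h h1 : R -> R) (delta r l : R) : R :=
  epsilon (inhabits 0)
    (fun m => -1 <= m <= 1 /\
      (l <= 0 -> (1 + delta) * Rint (w h h1 r) (-1) l = Rint (w h h1 r) (-1) m) /\
      (0 <= l -> (1 - delta) * Rint (w h h1 r) l 1 = Rint (w h h1 r) m 1)).

Definition PsiL (h h1 : R -> R) (delta : R) (x : R * R) : R * R :=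
  if Req_EM_T (fst x) (1/2) then
    (if Req_EM_T (snd x) 0 then (1/2, 0)
     else let p := K h x in Phi h (fst p, g h h1 delta (fst p) (snd p)))
  else let p := K h x in Phi h (fst p, g h h1 delta (fst p) (snd p)).

Definition Psi (h h1 : R -> R) (delta : R) (x : R * R) : R * R :=
  let x1 := fst x in let x2 := snd x in
  if Req_EM_T x2 (1/2) then
    (if Rle_dec x1 (1/2) then ((1 + delta) * x1, 1/2)
     else ((1 + delta) / 2 + (1 - delta) * (x1 - 1/2), 1/2))
  else if Rlt_dec (1/2) x2 then
    let y := PsiL h h1 delta (x1, 1 - x2) in (fst y, 1 - snd y)
  else PsiL h h1 delta x.

Definition dist2 (x y : R * R) : R :=
  sqrt ((fst x - fst y) ^ 2 + (snd x - snd y) ^ 2).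

Definition dcorner (x : R * R) : R :=
  Rmin (Rmin (dist2 x (0,0)) (dist2 x (1,0)))
       (Rmin (dist2 x (0,1)) (dist2 x (1,1))).

From Stdlib Require Import Reals Rgeom Lra Psatz ClassicalEpsilon.
From Coquelicot Require Import Coquelicot.
Open Scope R_scope.

(* Below the midline, [Psi_delta] slides each point [Phi (r, t)] along its arc to
   [Phi (r, g_r t)].
   That arc is comparable to its chord, and the endpoint of the arc is within a constant
   times [|r + h r - s|] of the nearest corner, [s] being the distance from the centre of
   the arc to that corner; by the triangle inequality [|r + h r - s|] is at most the
   distance from the point to the corner.  The upper half follows by reflection, and on
   the midline [Psi_delta] is an explicit affine stretch. *)

Lemma Rabs_sin_le (a : R) : Rabs (sin a) <= Rabs a.
Proof.
  assert (Hpos : forall b, 0 <= b -> Rabs (sin b) <= b).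
  { intros b Hb. apply Rabs_le. split.
    - destruct (Rle_lt_dec 1 b); [pose proof (SIN_bound b); lra|].
      pose proof PI2_1. pose proof (sin_ge_0 b Hb ltac:(lra)). lra.
    - destruct (Req_dec b 0) as [->|Hb0]; [rewrite sin_0; lra|].
      pose proof (sin_lt_x b ltac:(lra)). lra. }
  destruct (Rle_lt_dec 0 a).
  - rewrite (Rabs_right a) by lra. auto.
  - rewrite (Rabs_left a), <- Rabs_Ropp, <- sin_neg by lra. apply Hpos; lra.
Qed.

Lemma one_minus_cos_le (y : R) : 1 - cos y <= y ^ 2 / 2.
Proof.
  replace y with (2 * (y / 2)) at 1 by field.
  rewrite cos_2a_sin.
  pose proof (Rabs_sin_le (y / 2)) as Hs.
  assert (Hsq : Rabs (sin (y / 2)) * Rabs (sin (y / 2)) <= Rabs (y / 2) * Rabs (y / 2))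
    by (apply Rmult_le_compat; try apply Rabs_pos; lra).
  rewrite <- !Rabs_mult, !Rabs_right in Hsq by (apply Rle_ge; nra).
  nra.
Qed.

Lemma sin_ge_third (a : R) : 0 <= a <= 2 -> a / 3 <= sin a.
Proof.
  intros Ha. destruct (pre_sin_bound a 0 ltac:(lra) ltac:(lra)) as [Hlb _].
  unfold sin_approx, sin_term in Hlb. simpl in Hlb. nra.
Qed.

Lemma continuity_pt_ex_derive (f : R -> R) (x : R) : ex_derive f x -> continuity_pt f x.
Proof. intros H. apply continuity_pt_filterlim, (ex_derive_continuous f x H). Qed.

Lemma dist2_dist_euc (a b : R * R) :
  dist2 a b = dist_euc (fst a) (snd a) (fst b) (snd b).
Proof. unfold dist2, dist_euc. rewrite !Rsqr_pow2. reflexivity. Qed.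

Lemma dist2_nonneg (a b : R * R) : 0 <= dist2 a b.
Proof. apply sqrt_pos. Qed.

Lemma dist2_sym (a b : R * R) : dist2 a b = dist2 b a.
Proof. unfold dist2. f_equal. ring. Qed.

Lemma dist2_triangle (a b c : R * R) : dist2 a c <= dist2 a b + dist2 b c.
Proof. rewrite !dist2_dist_euc. apply triangle. Qed.

Lemma dist2_le (a b : R * R) (X : R) : 0 <= X ->
  (fst a - fst b) ^ 2 + (snd a - snd b) ^ 2 <= X ^ 2 -> dist2 a b <= X.
Proof.
  intros HX H. unfold dist2. rewrite <- (sqrt_pow2 X HX). apply sqrt_le_1_alt, H.
Qed.

Lemma dist2_ge (a b : R * R) (Y : R) :
  Y ^ 2 <= (fst a - fst b) ^ 2 + (snd a - snd b) ^ 2 -> Y <= dist2 a b.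
Proof.
  intros H. destruct (Rle_lt_dec Y 0); [pose proof (dist2_nonneg a b); lra|].
  unfold dist2. rewrite <- (sqrt_pow2 Y) by lra. apply sqrt_le_1_alt, H.
Qed.

Lemma dcorner_nonneg (x : R * R) : 0 <= dcorner x.
Proof.
  unfold dcorner. pose proof (dist2_nonneg x (0,0)). pose proof (dist2_nonneg x (1,0)).
  pose proof (dist2_nonneg x (0,1)). pose proof (dist2_nonneg x (1,1)).
  unfold Rmin; repeat destruct Rle_dec; lra.
Qed.

Lemma dcorner_ge (x : R * R) (c Y : R) :
  Y <= c * dist2 x (0,0) -> Y <= c * dist2 x (1,0) ->
  Y <= c * dist2 x (0,1) -> Y <= c * dist2 x (1,1) ->
  Y <= c * dcorner x.
Proof. intros. unfold dcorner, Rmin. repeat destruct Rle_dec; lra. Qed.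

Lemma dcorner_reflect1 (x1 x2 : R) : dcorner (1 - x1, x2) = dcorner (x1, x2).
Proof.
  unfold dcorner.
  replace (dist2 (1-x1,x2) (0,0)) with (dist2 (x1,x2) (1,0))
    by (unfold dist2; f_equal; simpl; ring).
  replace (dist2 (1-x1,x2) (1,0)) with (dist2 (x1,x2) (0,0))
    by (unfold dist2; f_equal; simpl; ring).
  replace (dist2 (1-x1,x2) (0,1)) with (dist2 (x1,x2) (1,1))
    by (unfold dist2; f_equal; simpl; ring).
  replace (dist2 (1-x1,x2) (1,1)) with (dist2 (x1,x2) (0,1))
    by (unfold dist2; f_equal; simpl; ring).
  now rewrite (Rmin_comm (dist2 (x1,x2) (1,0))), (Rmin_comm (dist2 (x1,x2) (1,1))).
Qed.

Lemma dcorner_reflect2 (x1 x2 : R) : dcorner (x1, 1 - x2) = dcorner (x1, x2).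
Proof.
  unfold dcorner.
  replace (dist2 (x1,1-x2) (0,0)) with (dist2 (x1,x2) (0,1))
    by (unfold dist2; simpl; f_equal; ring).
  replace (dist2 (x1,1-x2) (1,0)) with (dist2 (x1,x2) (1,1))
    by (unfold dist2; simpl; f_equal; ring).
  replace (dist2 (x1,1-x2) (0,1)) with (dist2 (x1,x2) (0,0))
    by (unfold dist2; simpl; f_equal; ring).
  replace (dist2 (x1,1-x2) (1,1)) with (dist2 (x1,x2) (1,0))
    by (unfold dist2; simpl; f_equal; ring).
  apply Rmin_comm.
Qed.

Lemma dcorner_midline (x1 : R) : 1/2 <= dcorner (x1, 1/2).
Proof.
  rewrite <- (Rmult_1_l (dcorner _)).
  apply dcorner_ge; rewrite Rmult_1_l; apply dist2_ge; cbn [fst snd];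
    pose proof (pow2_ge_0 (x1 - 0)); pose proof (pow2_ge_0 (x1 - 1)); nra.
Qed.

(* [g] of the statement is [epsilon] of this predicate, with [f := w h h1 r]. *)
Definition reparam_spec (f : R -> R) (delta l m : R) : Prop :=
  -1 <= m <= 1 /\
  (l <= 0 -> (1 + delta) * Rint f (-1) l = Rint f (-1) m) /\
  (0 <= l -> (1 - delta) * Rint f l 1 = Rint f m 1).

Section EvenWeight.

Variables (f : R -> R) (W : R).
Hypothesis f_cont : forall t, continuous f t.
Hypothesis f_even : forall t, f (- t) = f t.
Hypothesis f_ge_1 : forall t, -1 <= t <= 1 -> 1 <= f t.
Hypothesis f_le_W : forall t, -1 <= t <= 1 -> f t <= W.

Lemma ex_RInt_weight (a b : R) : ex_RInt f a b.
Proof. apply (ex_RInt_continuous (V := R_CompleteNormedModule)). auto. Qed.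

Lemma Rint_weight (a b : R) : a <= b -> Rint f a b = RInt f a b.
Proof.
  intros Hab. unfold Rint.
  destruct (excluded_middle_informative _) as [Hi|Hn].
  - symmetry. apply RInt_Reals.
  - exfalso. apply Hn. constructor. apply continuity_implies_RiemannInt; [exact Hab|].
    intros x _. apply continuity_pt_filterlim, f_cont.
Qed.

Lemma RInt_weight_Chasles (a b c : R) : RInt f a b + RInt f b c = RInt f a c.
Proof. apply (RInt_Chasles f); apply ex_RInt_weight. Qed.

Lemma RInt_weight_swap (a b : R) : RInt f b a = - RInt f a b.
Proof. rewrite <- (opp_RInt_swap f a b (ex_RInt_weight a b)). reflexivity. Qed.

Lemma RInt_weight_bounds (a b : R) : -1 <= a -> a <= b -> b <= 1 ->
  b - a <= RInt f a b <= W * (b - a).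
Proof.
  intros Ha Hab Hb. split.
  - replace (b - a) with (RInt (fun _ => 1) a b)
      by (rewrite RInt_const; unfold scal; simpl; unfold mult; simpl; ring).
    apply RInt_le; auto using ex_RInt_const, ex_RInt_weight.
    intros x Hx. apply f_ge_1. lra.
  - replace (W * (b - a)) with (RInt (fun _ => W) a b)
      by (rewrite RInt_const; unfold scal; simpl; unfold mult; simpl; ring).
    apply RInt_le; auto using ex_RInt_const, ex_RInt_weight.
    intros x Hx. apply f_le_W. lra.
Qed.

Lemma RInt_weight_abs_bounds (a b : R) : -1 <= a <= 1 -> -1 <= b <= 1 ->
  Rabs (b - a) <= Rabs (RInt f a b) <= W * Rabs (b - a).
Proof.
  intros Ha Hb. destruct (Rle_lt_dec a b).
  - pose proof (RInt_weight_bounds a b ltac:(lra) ltac:(lra) ltac:(lra)).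
    rewrite !Rabs_right by lra. lra.
  - pose proof (RInt_weight_bounds b a ltac:(lra) ltac:(lra) ltac:(lra)).
    rewrite RInt_weight_swap, Rabs_Ropp, (Rabs_right (RInt f b a)), (Rabs_left (b - a)) by lra.
    lra.
Qed.

Lemma RInt_weight_halves : RInt f (-1) 0 = RInt f 0 1.
Proof.
  assert (Hlin : RInt (fun y => scal (-1) (f (-1 * y + 0))) 0 1 = RInt f (-1 * 0 + 0) (-1 * 1 + 0))
    by (apply (RInt_comp_lin f); apply ex_RInt_weight).
  rewrite (RInt_ext _ (fun y => opp (f y))) in Hlin.
  2:{ intros y _. unfold scal, opp; simpl; unfold mult; simpl.
      replace (-1 * y + 0) with (- y) by ring. rewrite f_even. ring. }
  rewrite (RInt_opp (V := R_CompleteNormedModule)) in Hlin by apply ex_RInt_weight.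
  replace (-1 * 0 + 0) with 0 in Hlin by ring. replace (-1 * 1 + 0) with (-1) in Hlin by ring.
  rewrite (RInt_weight_swap (-1) 0) in Hlin.
  change (- RInt f 0 1 = - RInt f (-1) 0) in Hlin. lra.
Qed.

Lemma continuity_RInt_weight : continuity (fun u => RInt f (-1) u).
Proof.
  intros x. apply continuity_pt_ex_derive. exists (f x).
  apply (is_derive_RInt (V := R_NormedModule) f _ (-1) x); [|apply f_cont].
  apply filter_forall. intros y. apply (RInt_correct (V := R_CompleteNormedModule)), ex_RInt_weight.
Qed.

(* [F u = RInt f (-1) u] increases continuously from [0] to [F 1 = 2 F 0];
   the evenness of [f] makes both defining equations agree at [l = 0]. *)
Lemma reparam_exists (delta l : R) : -1 < delta < 1 -> -1 <= l <= 1 ->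
  exists m, reparam_spec f delta l m.
Proof.
  intros Hd Hl.
  set (F := fun u => RInt f (-1) u).
  assert (F0 : F (-1) = 0) by (unfold F; rewrite RInt_point; reflexivity).
  assert (F1 : F 1 = 2 * F 0)
    by (unfold F; rewrite <- (RInt_weight_Chasles (-1) 0 1), <- RInt_weight_halves; lra).
  assert (Fmono : forall a b, -1 <= a -> a <= b -> b <= 1 -> F a <= F b).
  { intros a b Ha Hab Hb. unfold F. rewrite <- (RInt_weight_Chasles (-1) a b).
    pose proof (RInt_weight_bounds a b Ha Hab Hb). lra. }
  assert (Hivt : forall y, 0 <= y <= F 1 -> exists m, -1 <= m <= 1 /\ F m = y).
  { intros y Hy. destruct (IVT_gen F (-1) 1 y continuity_RInt_weight) as [m [Hm Hmy]].
    - rewrite F0, Rmin_left, Rmax_right by lra. lra.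
    - rewrite Rmin_left, Rmax_right in Hm by lra. eauto. }
  assert (Hto1 : forall a, RInt f a 1 = F 1 - F a)
    by (intros a; unfold F; rewrite <- (RInt_weight_Chasles (-1) a 1); lra).
  unfold reparam_spec. destruct (Rle_lt_dec l 0).
  - destruct (Hivt ((1 + delta) * F l)) as [m [Hm Hmy]].
    { pose proof (Fmono (-1) l ltac:(lra) ltac:(lra) ltac:(lra)).
      pose proof (Fmono l 0 ltac:(lra) ltac:(lra) ltac:(lra)). split; nra. }
    exists m. split; [exact Hm|]. split.
    + intros _. rewrite !Rint_weight by lra. unfold F in Hmy. lra.
    + intros Hl0. assert (l = 0) by lra. subst l.
      rewrite !Rint_weight, !Hto1, Hmy, F1 by lra. ring.
  - destruct (Hivt (F 1 - (1 - delta) * (F 1 - F l))) as [m [Hm Hmy]].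
    { pose proof (Fmono 0 l ltac:(lra) ltac:(lra) ltac:(lra)).
      pose proof (Fmono l 1 ltac:(lra) ltac:(lra) ltac:(lra)). split; nra. }
    exists m. split; [exact Hm|]. split; [intros; lra|].
    intros _. rewrite !Rint_weight, !Hto1, Hmy by lra. lra.
Qed.

Lemma reparam_displacement (delta l m : R) : -1 <= l <= 1 -> reparam_spec f delta l m ->
  Rabs (m - l) <= Rabs delta * W * (1 - Rabs l).
Proof.
  intros Hl [Hm [Hneg Hpos]].
  destruct (RInt_weight_abs_bounds l m Hl Hm) as [Hlow _].
  destruct (Rle_lt_dec l 0) as [Hl0|Hl0].
  - specialize (Hneg Hl0). rewrite !Rint_weight in Hneg by lra.
    assert (E : RInt f l m = delta * RInt f (-1) l)
      by (pose proof (RInt_weight_Chasles (-1) l m); lra).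
    destruct (RInt_weight_abs_bounds (-1) l ltac:(lra) Hl) as [_ Hup].
    rewrite E, Rabs_mult in Hlow. rewrite (Rabs_left1 l) by lra.
    rewrite (Rabs_right (l - -1)) in Hup by lra.
    replace (1 - - l) with (l - -1) by ring. rewrite Rmult_assoc.
    eapply Rle_trans; [exact Hlow|]. apply Rmult_le_compat_l; [apply Rabs_pos|exact Hup].
  - specialize (Hpos (Rlt_le _ _ Hl0)). rewrite !Rint_weight in Hpos by lra.
    assert (E : RInt f l m = delta * RInt f l 1)
      by (pose proof (RInt_weight_Chasles l m 1); lra).
    destruct (RInt_weight_abs_bounds l 1 Hl ltac:(lra)) as [_ Hup].
    rewrite E, Rabs_mult in Hlow. rewrite (Rabs_right l) by lra.
    rewrite (Rabs_right (1 - l)) in Hup by lra. rewrite Rmult_assoc.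
    eapply Rle_trans; [exact Hlow|]. apply Rmult_le_compat_l; [apply Rabs_pos|exact Hup].
Qed.

End EvenWeight.

Lemma acos_le_PI2 (y : R) : 0 <= y <= 1 -> acos y <= PI / 2.
Proof.
  intros Hy. destruct (Rle_lt_dec (acos y) (PI / 2)) as [|Hlt]; [assumption|].
  pose proof (acos_bound y). pose proof (cos_acos y ltac:(lra)). pose proof PI_RGT_0.
  assert (cos (acos y) < 0) by (apply cos_lt_0; lra). lra.
Qed.

Lemma chord_sq (p a b : R) :
  (p * sin a - p * sin b) ^ 2 + (p * cos a - p * cos b) ^ 2 = 2 * p ^ 2 * (1 - cos (a - b)).
Proof.
  rewrite cos_minus. pose proof (sin2_cos2 a). pose proof (sin2_cos2 b).
  unfold Rsqr in *. nra.
Qed.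

Lemma dist2_ge_half (x c : R * R) : fst x <= 1/2 -> snd x <= 1/2 ->
  fst c = 1 \/ snd c = 1 -> 1/2 <= dist2 x c.
Proof.
  intros Hx1 Hx2 [Hc|Hc]; apply dist2_ge; rewrite Hc;
    pose proof (pow2_ge_0 (fst x - fst c)); pose proof (pow2_ge_0 (snd x - snd c)); nra.
Qed.

Section ArcCoordinates.

Variables h h1 : R -> R.
Hypothesis h_nonneg : forall r, 0 <= r < 1/2 -> 0 <= h r.
Hypothesis h_mono : forall r s, 0 <= r -> r <= s -> s < 1/2 -> h r <= h s.
Hypothesis h_zero : forall r, 0 <= r <= 1/10 -> h r = 0.
Hypothesis h_unbounded : forall M, exists eps, 0 < eps /\
  forall r, 1/2 - eps < r < 1/2 -> M < h r.
Hypothesis h_deriv : forall r, 0 < r < 1/2 -> derivable_pt_lim h r (h1 r).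

Lemma h1_nonneg (r : R) : 0 < r < 1/2 -> 0 <= h1 r.
Proof.
  intros Hr. destruct (Rle_lt_dec 0 (h1 r)) as [|Hneg]; [assumption|exfalso].
  destruct (h_deriv r Hr (- h1 r / 2) ltac:(lra)) as [del Hdel].
  pose proof (cond_pos del).
  set (k := Rmin (del / 2) ((1/2 - r) / 2)).
  assert (Hk : 0 < k) by (apply Rmin_pos; lra).
  assert (k <= del / 2) by apply Rmin_l. assert (k <= (1/2 - r) / 2) by apply Rmin_r.
  specialize (Hdel k ltac:(lra) ltac:(rewrite Rabs_right; lra)).
  assert (h r <= h (r + k)) by (apply h_mono; lra).
  assert (0 <= (h (r + k) - h r) / k) by (apply Rdiv_le_0_compat; lra).
  apply Rabs_lt_between in Hdel. lra.
Qed.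

Lemma ex_derive_h (r : R) : 0 < r < 1/2 -> ex_derive h r.
Proof. intros Hr. exists (h1 r). apply is_derive_Reals, h_deriv, Hr. Qed.

Lemma exists_large_h (M a : R) : a < 1/2 -> exists r, a <= r < 1/2 /\ M < h r.
Proof.
  intros Ha. destruct (h_unbounded M) as [eps [He Hr]].
  pose proof (Rmax_l a (1/2 - eps/2)). pose proof (Rmax_r a (1/2 - eps/2)).
  assert (Rmax a (1/2 - eps/2) < 1/2) by (apply Rmax_lub_lt; lra).
  exists (Rmax a (1/2 - eps/2)). split; [lra|]. apply Hr. lra.
Qed.

(* The arc of radius [r + h r] about [(1/2, - h r)] meets [x2 = 0] at half-width
   [sqrt (half_width_sq r)]; [r0 h] is the radius at which it reaches the corners. *)
Definition half_width_sq (r : R) : R := 2 * r * h r + r ^ 2.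

Lemma half_width_sq_lt (r s : R) : 0 <= r -> r < s -> s < 1/2 ->
  half_width_sq r < half_width_sq s.
Proof.
  intros. unfold half_width_sq.
  pose proof (h_mono r s ltac:(lra) ltac:(lra) ltac:(lra)). pose proof (h_nonneg r ltac:(lra)).
  nra.
Qed.

Lemma r0_spec : 0 < r0 h < 1/2 /\ half_width_sq (r0 h) = 1/4.
Proof.
  unfold r0. apply (epsilon_spec (inhabits 0) (fun r => 0 < r < 1/2 /\ half_width_sq r = 1/4)).
  destruct (exists_large_h 1 (3/8) ltac:(lra)) as [r2 [Hr2 Hh2]].
  destruct (Ranalysis5.IVT_interv (fun r => 2 * r * h r + r ^ 2 - 1/4) (1/10) r2)
    as [z [Hz Hz0]].
  - intros a Ha. apply continuity_pt_ex_derive. auto_derive. apply ex_derive_h. lra.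
  - lra.
  - rewrite h_zero by lra. lra.
  - nra.
  - exists z. unfold half_width_sq. split; lra.
Qed.

Definition hr0 : R := h (r0 h).

Lemma hr0_pos : 0 < hr0.
Proof. destruct r0_spec as [Hr Hq]. unfold hr0, half_width_sq in *. nra. Qed.

Lemma half_width_sq_le_of_le_r0 (r : R) : 0 < r -> r <= r0 h -> half_width_sq r <= 1/4.
Proof.
  intros Hr Hle. destruct r0_spec as [Hr0 Hq].
  destruct (Req_dec r (r0 h)) as [->|Hn]; [lra|].
  pose proof (half_width_sq_lt r (r0 h) ltac:(lra) ltac:(lra) ltac:(lra)). lra.
Qed.

Lemma half_width_sq_gt_of_gt_r0 (r : R) : r0 h < r -> r < 1/2 -> 1/4 < half_width_sq r.
Proof.
  intros Hgt Hr. destruct r0_spec as [Hr0 Hq].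
  pose proof (half_width_sq_lt (r0 h) r ltac:(lra) ltac:(lra) ltac:(lra)). lra.
Qed.

Lemma Theta_le_r0 (r : R) : 0 < r -> r <= r0 h ->
  (r + h r) * cos (Theta h r) = h r /\
  ((r + h r) * sin (Theta h r)) ^ 2 = half_width_sq r /\
  0 < Theta h r <= PI / 2.
Proof.
  intros Hr Hle. destruct r0_spec as [Hr0 _].
  assert (HT : Theta h r = acos (h r / (h r + r)))
    by (unfold Theta; destruct (Rle_dec r (r0 h)); [reflexivity|lra]).
  pose proof (h_nonneg r ltac:(lra)).
  set (y := h r / (h r + r)) in *.
  assert (Hy : 0 <= y < 1).
  { unfold y. split; [apply Rdiv_le_0_compat; lra|].
    apply Rmult_lt_reg_r with (h r + r); [lra|]. field_simplify; lra. }
  pose proof (cos_acos y ltac:(lra)) as Hc. pose proof (sin_acos y ltac:(lra)) as Hs.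
  pose proof (acos_bound y). pose proof (acos_le_PI2 y ltac:(lra)).
  rewrite HT. split; [|split].
  - rewrite Hc. unfold y. field. lra.
  - rewrite Hs, Rpow_mult_distr, <- (Rsqr_pow2 (sqrt _)), Rsqr_sqrt
      by (unfold Rsqr; nra).
    unfold y, half_width_sq, Rsqr. field. lra.
  - split; [|lra]. destruct (Req_dec (acos y) 0) as [E|]; [|lra].
    rewrite E, cos_0 in Hc. lra.
Qed.

Lemma Theta_gt_r0 (r : R) : r0 h < r < 1/2 ->
  (r + h r) * sin (Theta h r) = 1/2 /\
  ((r + h r) * cos (Theta h r)) ^ 2 = (r + h r) ^ 2 - 1/4 /\
  1/2 < r + h r /\
  0 < Theta h r <= PI / 2.
Proof.
  intros Hr. destruct r0_spec as [Hr0 _].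
  assert (HT : Theta h r = asin (1 / (2 * (h r + r))))
    by (unfold Theta; destruct (Rle_dec r (r0 h)); [lra|reflexivity]).
  pose proof (h_nonneg r ltac:(lra)).
  pose proof (half_width_sq_gt_of_gt_r0 r ltac:(lra) ltac:(lra)) as Hq.
  unfold half_width_sq in Hq.
  assert (Hrho : 1/2 < r + h r) by nra.
  set (y := 1 / (2 * (h r + r))) in *.
  assert (Hy : 0 < y < 1).
  { unfold y. split; [apply Rdiv_lt_0_compat; lra|].
    apply Rmult_lt_reg_r with (2 * (h r + r)); [lra|]. field_simplify; lra. }
  pose proof (sin_asin y ltac:(lra)) as Hs. pose proof (cos_asin y ltac:(lra)) as Hc.
  pose proof (asin_bound y).
  rewrite HT. split; [|split; [|split]].
  - rewrite Hs. unfold y. field. lra.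
  - rewrite Hc, Rpow_mult_distr, <- (Rsqr_pow2 (sqrt _)), Rsqr_sqrt
      by (unfold Rsqr; nra).
    unfold y, Rsqr. field. lra.
  - exact Hrho.
  - split; [|lra]. destruct (Rle_lt_dec (asin y) 0) as [Hn|]; [exfalso|lra].
    destruct (Req_dec (asin y) 0) as [E|E]; [rewrite E, sin_0 in Hs; lra|].
    pose proof PI_RGT_0. pose proof (sin_lt_0_var (asin y) ltac:(lra) ltac:(lra)). lra.
Qed.

Lemma Theta_bounds (r : R) : 0 < r < 1/2 -> 0 < Theta h r <= PI / 2.
Proof.
  intros Hr. destruct (Rle_lt_dec r (r0 h)).
  - apply (Theta_le_r0 r); lra.
  - apply (Theta_gt_r0 r); lra.
Qed.

Lemma Theta_le_2 (r : R) : 0 < r < 1/2 -> Theta h r <= 2.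
Proof. intros Hr. pose proof (Theta_bounds r Hr). pose proof PI_4. lra. Qed.

Lemma Phi_dist_center (r t : R) : 0 <= r + h r ->
  dist2 (Phi h (r, t)) (1/2, - h r) = r + h r.
Proof.
  intros Hp. unfold dist2, Phi. cbn [fst snd].
  pose proof (sin2_cos2 (t * Theta h r)) as Hsc. rewrite !Rsqr_pow2 in Hsc.
  replace (_ + _) with ((r + h r) ^ 2 * (sin (t * Theta h r) ^ 2 + cos (t * Theta h r) ^ 2))
    by ring.
  rewrite Hsc, Rmult_1_r. apply sqrt_pow2, Hp.
Qed.

Lemma Phi_chord_le (r m t : R) : 0 <= r + h r -> 0 <= Theta h r ->
  dist2 (Phi h (r, m)) (Phi h (r, t)) <= (r + h r) * Theta h r * Rabs (m - t).
Proof.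
  intros Hp HT. apply dist2_le; [apply Rmult_le_pos; [nra|apply Rabs_pos]|].
  unfold Phi; cbn [fst snd].
  replace (1/2 + (r + h r) * sin (m * Theta h r) - (1/2 + (r + h r) * sin (t * Theta h r)))
    with ((r + h r) * sin (m * Theta h r) - (r + h r) * sin (t * Theta h r)) by ring.
  replace ((r + h r) * cos (m * Theta h r) - h r - ((r + h r) * cos (t * Theta h r) - h r))
    with ((r + h r) * cos (m * Theta h r) - (r + h r) * cos (t * Theta h r)) by ring.
  rewrite chord_sq.
  pose proof (one_minus_cos_le (m * Theta h r - t * Theta h r)).
  replace (((r + h r) * Theta h r * Rabs (m - t)) ^ 2)
    with ((r + h r) ^ 2 * (m * Theta h r - t * Theta h r) ^ 2)
    by (rewrite !Rpow_mult_distr, pow2_abs; ring).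
  pose proof (pow2_ge_0 (r + h r)). nra.
Qed.

Lemma Phi_chord_ge (r t : R) : 0 < r < 1/2 -> -1 <= t <= 0 ->
  (r + h r) * Theta h r * (1 + t) / 3 <= dist2 (Phi h (r, t)) (Phi h (r, -1)).
Proof.
  intros Hr Ht. apply dist2_ge.
  pose proof (Theta_bounds r Hr). pose proof (Theta_le_2 r Hr). pose proof (h_nonneg r ltac:(lra)).
  unfold Phi; cbn [fst snd].
  replace (1/2 + (r + h r) * sin (t * Theta h r) - (1/2 + (r + h r) * sin (-1 * Theta h r)))
    with ((r + h r) * sin (t * Theta h r) - (r + h r) * sin (-1 * Theta h r)) by ring.
  replace ((r + h r) * cos (t * Theta h r) - h r - ((r + h r) * cos (-1 * Theta h r) - h r))
    with ((r + h r) * cos (t * Theta h r) - (r + h r) * cos (-1 * Theta h r)) by ring.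
  rewrite chord_sq.
  set (phi := Theta h r * (1 + t)).
  replace (t * Theta h r - -1 * Theta h r) with (2 * (phi / 2)) by (unfold phi; field).
  rewrite cos_2a_sin.
  assert (Hphi : 0 <= phi <= 2) by (unfold phi; nra).
  pose proof (sin_ge_third (phi / 2) ltac:(lra)).
  replace ((r + h r) * Theta h r * (1 + t) / 3) with ((r + h r) * (phi / 3)) by (unfold phi; field).
  assert (phi / 6 * (phi / 6) <= sin (phi / 2) * sin (phi / 2)) by (apply Rmult_le_compat; lra).
  pose proof (pow2_ge_0 (r + h r)). nra.
Qed.

Lemma Phi_reflect (r t : R) : Phi h (r, - t) = (1 - fst (Phi h (r, t)), snd (Phi h (r, t))).
Proof.
  unfold Phi. cbn [fst snd]. replace (- t * Theta h r) with (- (t * Theta h r)) by ring.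
  rewrite sin_neg, cos_neg. f_equal. field.
Qed.

Definition C_end : R := 4 * (hr0 + 1) + 2 + 1 / hr0.

Lemma C_end_ge : 4 * (hr0 + 1) + 2 <= C_end.
Proof. unfold C_end. pose proof hr0_pos. pose proof (Rdiv_lt_0_compat 1 hr0 ltac:(lra) H). lra. Qed.

Lemma center_origin_dist_sq (r : R) : dist2 (1/2, - h r) (0, 0) ^ 2 = 1/4 + h r ^ 2.
Proof.
  unfold dist2. cbn [fst snd]. rewrite <- (Rsqr_pow2 (sqrt _)), Rsqr_sqrt by nra. field.
Qed.

Lemma Phi_origin_dist_ge (r t : R) : 0 <= r + h r ->
  Rabs (r + h r - dist2 (1/2, - h r) (0, 0)) <= dist2 (Phi h (r, t)) (0, 0).
Proof.
  intros Hp. pose proof (Phi_dist_center r t Hp).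
  pose proof (dist2_triangle (Phi h (r, t)) (0, 0) (1/2, - h r)).
  pose proof (dist2_triangle (1/2, - h r) (Phi h (r, t)) (0, 0)).
  rewrite (dist2_sym (0, 0)) in *. rewrite (dist2_sym (1/2, - h r) (Phi h (r, t))) in *.
  apply Rabs_le. lra.
Qed.

(* For [r <= r0 h] the arc ends on the bottom edge at [(1/2 - S, 0)], and
   [(1/2 - S) (1/2 + S) = s^2 - (r + h r)^2] with [s] the center-to-corner distance. *)
Lemma endpoint_dist_le_of_le_r0 (r : R) : 0 < r -> r <= r0 h ->
  dist2 (Phi h (r, -1)) (0, 0) <= C_end * Rabs (r + h r - dist2 (1/2, - h r) (0, 0)).
Proof.
  intros Hr Hle. pose proof hr0_pos. destruct r0_spec as [Hr0 _].
  pose proof (h_nonneg r ltac:(lra)).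
  assert (h r <= hr0) by (apply h_mono; lra).
  pose proof (center_origin_dist_sq r). pose proof (dist2_nonneg (1/2, - h r) (0, 0)).
  set (s := dist2 (1/2, - h r) (0, 0)) in *.
  destruct (Theta_le_r0 r Hr Hle) as (Hc & Hs & HT).
  pose proof (half_width_sq_le_of_le_r0 r Hr Hle). unfold half_width_sq in *.
  pose proof (sin_ge_0 (Theta h r) ltac:(lra) ltac:(lra)).
  set (S := (r + h r) * sin (Theta h r)) in *.
  assert (0 <= S) by (unfold S; nra).
  assert (HS : S <= 1/2) by nra.
  assert (Hrs : r + h r <= s) by nra.
  pose proof C_end_ge.
  assert (Hk : (1/2 - S) * (1/2) <= (s - (r + h r)) * (s + (r + h r))) by nra.
  rewrite Rabs_left1 by lra.
  apply dist2_le; [apply Rmult_le_pos; lra|].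
  unfold Phi; cbn [fst snd].
  replace (-1 * Theta h r) with (- Theta h r) by ring. rewrite sin_neg, cos_neg, Hc.
  replace (1/2 + (r + h r) * - sin (Theta h r) - 0) with (1/2 - S) by (unfold S; ring).
  replace (h r - h r - 0) with 0 by ring.
  assert (1/2 - S <= C_end * - (r + h r - s)) by nra.
  nra.
Qed.

(* For [r > r0 h] the arc ends on the left edge at [(0, T - h r)], and
   [(T - h r) (T + h r) = (r + h r)^2 - s^2]. *)
Lemma endpoint_dist_le_of_gt_r0 (r : R) : r0 h < r < 1/2 ->
  dist2 (Phi h (r, -1)) (0, 0) <= C_end * Rabs (r + h r - dist2 (1/2, - h r) (0, 0)).
Proof.
  intros Hr. pose proof hr0_pos. destruct r0_spec as [Hr0 _].
  assert (hr0 <= h r) by (apply h_mono; lra).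
  pose proof (center_origin_dist_sq r). pose proof (dist2_nonneg (1/2, - h r) (0, 0)).
  set (s := dist2 (1/2, - h r) (0, 0)) in *.
  destruct (Theta_gt_r0 r Hr) as (Hs & Hc & Hrho & HT).
  pose proof (half_width_sq_gt_of_gt_r0 r ltac:(lra) ltac:(lra)). unfold half_width_sq in *.
  pose proof (cos_ge_0 (Theta h r) ltac:(lra) ltac:(lra)).
  set (T := (r + h r) * cos (Theta h r)) in *.
  assert (0 <= T) by (unfold T; nra).
  assert (HTh : h r <= T) by nra.
  assert (Hrs : s <= r + h r) by nra.
  assert (Hk : (T - h r) * h r <= (r + h r - s) * (1 + 2 * h r)).
  { assert ((T - h r) * (T + h r) = (r + h r - s) * (r + h r + s)) by nra. nra. }
  assert (Hk2 : T - h r <= (r + h r - s) * (1 / h r + 2)).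
  { apply Rmult_le_reg_r with (h r); [lra|].
    replace ((r + h r - s) * (1 / h r + 2) * h r) with ((r + h r - s) * (1 + 2 * h r))
      by (field; lra).
    lra. }
  assert (1 / h r <= 1 / hr0)
    by (apply Rmult_le_reg_r with (h r * hr0); [nra|]; field_simplify; lra).
  assert (Hk3 : T - h r <= C_end * (r + h r - s)) by (unfold C_end; nra).
  rewrite Rabs_right by lra.
  pose proof C_end_ge.
  apply dist2_le; [apply Rmult_le_pos; lra|].
  unfold Phi; cbn [fst snd].
  replace (-1 * Theta h r) with (- Theta h r) by ring. rewrite sin_neg, cos_neg.
  replace (1/2 + (r + h r) * - sin (Theta h r) - 0) with 0 by lra.
  fold T. replace (0 ^ 2 + (T - h r - 0) ^ 2) with ((T - h r) ^ 2) by ring.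
  apply pow_incr. lra.
Qed.

Lemma endpoint_dist_le (r : R) : 0 < r < 1/2 ->
  dist2 (Phi h (r, -1)) (0, 0) <= C_end * Rabs (r + h r - dist2 (1/2, - h r) (0, 0)).
Proof.
  intros Hr. destruct (Rle_lt_dec r (r0 h)).
  - apply endpoint_dist_le_of_le_r0; lra.
  - apply endpoint_dist_le_of_gt_r0; lra.
Qed.

Definition C_arc : R := 2 * (r0 h + hr0) + 2.

Lemma arc_length_le_of_gt_r0 (r : R) : r0 h < r < 1/2 -> (r + h r) * Theta h r <= 3/2.
Proof.
  intros Hr. destruct (Theta_gt_r0 r Hr) as (Hs & _ & Hrho & HT).
  pose proof (sin_ge_third (Theta h r) ltac:(pose proof PI_4; lra)).
  assert ((r + h r) * (Theta h r / 3) <= 1/2) by (rewrite <- Hs; apply Rmult_le_compat_l; lra).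
  lra.
Qed.

Lemma arc_length_le (r : R) : 0 < r < 1/2 -> (r + h r) * Theta h r <= C_arc.
Proof.
  intros Hr. pose proof (h_nonneg r ltac:(lra)). pose proof hr0_pos.
  destruct r0_spec as [Hr0 _]. pose proof (Theta_bounds r Hr). pose proof (Theta_le_2 r Hr).
  unfold C_arc. destruct (Rle_lt_dec r (r0 h)).
  - assert (h r <= hr0) by (apply h_mono; lra). nra.
  - pose proof (arc_length_le_of_gt_r0 r ltac:(lra)). nra.
Qed.

Definition C_corner : R := 2 * C_arc + 3 * (1 + C_end).

Lemma C_corner_ge_1 : 1 <= C_corner.
Proof.
  unfold C_corner, C_arc. pose proof hr0_pos. pose proof C_end_ge.
  destruct r0_spec as [Hr0 _]. lra.
Qed.

(* The arc from [Phi (r, t)] back to its endpoint [Phi (r, -1)] is comparable to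
   the chord, and that endpoint is [C_end]-close to the corner [(0, 0)]. *)
Lemma arc_length_le_origin_dist (r t : R) : 0 < r < 1/2 -> -1 <= t <= 0 ->
  (r + h r) * Theta h r * (1 + t) <= 3 * (1 + C_end) * dist2 (Phi h (r, t)) (0, 0).
Proof.
  intros Hr Ht. pose proof (h_nonneg r ltac:(lra)). pose proof C_end_ge. pose proof hr0_pos.
  pose proof (Phi_chord_ge r t Hr Ht).
  pose proof (dist2_triangle (Phi h (r, t)) (0, 0) (Phi h (r, -1))).
  rewrite (dist2_sym (0, 0)) in *.
  pose proof (endpoint_dist_le r Hr).
  pose proof (Phi_origin_dist_ge r t ltac:(lra)).
  assert (C_end * Rabs (r + h r - dist2 (1/2, - h r) (0, 0))
          <= C_end * dist2 (Phi h (r, t)) (0, 0)) by (apply Rmult_le_compat_l; lra).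
  lra.
Qed.

Lemma Phi_left_quarter (r t : R) : 0 < r < 1/2 -> -1 <= t <= 0 ->
  fst (Phi h (r, t)) <= 1/2 /\ snd (Phi h (r, t)) <= 1/2.
Proof.
  intros Hr Ht. pose proof (h_nonneg r ltac:(lra)). pose proof (Theta_bounds r Hr).
  unfold Phi; cbn [fst snd]. split.
  - assert (0 <= sin (- t * Theta h r)) by (apply sin_ge_0; pose proof PI_RGT_0; nra).
    replace (t * Theta h r) with (- (- t * Theta h r)) by ring. rewrite sin_neg. nra.
  - pose proof (COS_bound (t * Theta h r)). nra.
Qed.

Lemma arc_length_le_dcorner_left (r t : R) : 0 < r < 1/2 -> -1 <= t <= 0 ->
  (r + h r) * Theta h r * (1 + t) <= C_corner * dcorner (Phi h (r, t)).
Proof.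
  intros Hr Ht. pose proof (h_nonneg r ltac:(lra)). pose proof (Theta_bounds r Hr).
  pose proof (arc_length_le r Hr). pose proof C_corner_ge_1.
  pose proof (arc_length_le_origin_dist r t Hr Ht).
  destruct (Phi_left_quarter r t Hr Ht) as [Hx1 Hx2].
  assert (0 <= (r + h r) * Theta h r) by (apply Rmult_le_pos; lra).
  set (L := (r + h r) * Theta h r * (1 + t)) in *.
  assert (HL : L <= C_arc) by (unfold L; nra).
  set (x := Phi h (r, t)) in *.
  assert (Hfar : forall c, fst c = 1 \/ snd c = 1 -> L <= C_corner * dist2 x c).
  { intros c Hc. pose proof (dist2_ge_half x c Hx1 Hx2 Hc).
    unfold C_corner in *. pose proof C_end_ge. pose proof hr0_pos. nra. }
  assert (Hnear : L <= C_corner * dist2 x (0, 0)).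
  { pose proof (dist2_nonneg x (0, 0)). unfold C_corner in *. pose proof C_end_ge.
    unfold C_arc in *. pose proof hr0_pos. destruct r0_spec. nra. }
  apply dcorner_ge; auto.
Qed.

Lemma arc_length_le_dcorner (r t : R) : 0 < r < 1/2 -> -1 <= t <= 1 ->
  (r + h r) * Theta h r * (1 - Rabs t) <= C_corner * dcorner (Phi h (r, t)).
Proof.
  intros Hr Ht. destruct (Rle_lt_dec t 0).
  - rewrite Rabs_left1 by lra. replace (1 - - t) with (1 + t) by ring.
    apply arc_length_le_dcorner_left; lra.
  - rewrite Rabs_right by lra.
    pose proof (arc_length_le_dcorner_left r (- t) Hr ltac:(lra)) as Hc.
    rewrite Phi_reflect in Hc. destruct (Phi h (r, t)) as [a b]. cbn [fst snd] in Hc.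
    rewrite dcorner_reflect1 in Hc. replace (1 - t) with (1 + - t) by ring. exact Hc.
Qed.

(* Every point of the lower half except [(1/2, 0)] lies on some arc: the gap
   [2 h r (r - x2) + r^2 - D] is negative for small [r] and positive as [h] blows up. *)
Lemma exists_arc_radius (x1 x2 : R) : 0 <= x1 <= 1 -> 0 <= x2 < 1/2 ->
  ~ (x1 = 1/2 /\ x2 = 0) ->
  exists r, 0 < r < 1/2 /\ (x1 - 1/2) ^ 2 + (x2 + h r) ^ 2 = (r + h r) ^ 2.
Proof.
  intros Hx1 Hx2 Hn.
  set (D := (x1 - 1/2) ^ 2 + x2 ^ 2).
  assert (HD : 0 < D).
  { unfold D. destruct (Req_dec x2 0) as [E|E].
    - assert (Hx : x1 - 1/2 <> 0) by (intro; apply Hn; split; lra).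
      pose proof (pow2_gt_0 _ Hx). rewrite E. lra.
    - pose proof (pow2_gt_0 _ E). pose proof (pow2_ge_0 (x1 - 1/2)). lra. }
  assert (HD2 : D <= 1/2) by (unfold D; nra).
  set (r1 := Rmin (1/10) (D / 2)).
  assert (r1 <= 1/10) by apply Rmin_l. assert (r1 <= D / 2) by apply Rmin_r.
  assert (0 < r1) by (apply Rmin_pos; lra).
  destruct (exists_large_h (D / (1/2 - x2)) (Rmax ((1/2 + x2) / 2) (1/5)))
    as [r2 [Hr2 Hh2]].
  { apply Rmax_lub_lt; lra. }
  pose proof (Rmax_l ((1/2 + x2) / 2) (1/5)). pose proof (Rmax_r ((1/2 + x2) / 2) (1/5)).
  assert (Hgap : D < 2 * h r2 * (r2 - x2)).
  { assert (D = 2 * (D / (1/2 - x2)) * ((1/2 - x2) / 2)) by (field; lra).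
    assert (0 <= D / (1/2 - x2)) by (apply Rdiv_le_0_compat; lra).
    assert (D / (1/2 - x2) * ((1/2 - x2) / 2) < h r2 * (r2 - x2)).
    { apply Rle_lt_trans with (D / (1/2 - x2) * (r2 - x2)); [apply Rmult_le_compat_l|
        apply Rmult_lt_compat_r]; lra. }
    lra. }
  destruct (Ranalysis5.IVT_interv (fun r => r ^ 2 + 2 * h r * (r - x2) - D) r1 r2)
    as [r [Hr Hr0]].
  - intros a Ha. apply continuity_pt_ex_derive. auto_derive. apply ex_derive_h. lra.
  - lra.
  - rewrite h_zero by lra. assert (r1 * r1 <= D / 2 * (D / 2)) by (apply Rmult_le_compat; lra).
    nra.
  - nra.
  - exists r. split; [lra|]. unfold D in Hr0. nra.
Qed.

Lemma angle_le_Theta (r al : R) : 0 < r < 1/2 -> - (PI / 2) <= al <= PI / 2 ->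
  Rabs ((r + h r) * sin al) <= 1/2 -> h r <= (r + h r) * cos al ->
  Rabs al <= Theta h r.
Proof.
  intros Hr Hal Hs Hc. pose proof (h_nonneg r ltac:(lra)). pose proof (Theta_bounds r Hr).
  pose proof PI_RGT_0.
  assert (0 <= Rabs al <= PI / 2) by (split; [apply Rabs_pos|apply Rabs_le; lra]).
  destruct (Rle_lt_dec r (r0 h)) as [Hle|Hgt].
  - destruct (Theta_le_r0 r ltac:(lra) Hle) as (HcT & _).
    assert (Hcos : cos (Rabs al) = cos al)
      by (unfold Rabs; destruct Rcase_abs; [apply cos_neg|reflexivity]).
    apply cos_decr_0; try lra. rewrite Hcos.
    apply Rmult_le_reg_l with (r + h r); lra.
  - destruct (Theta_gt_r0 r ltac:(lra)) as (HsT & _ & Hrho & _).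
    rewrite Rabs_mult, (Rabs_right (r + h r)) in Hs by lra.
    assert (Hsin : sin (Rabs al) = Rabs (sin al)).
    { unfold Rabs at 1. destruct Rcase_abs.
      - pose proof (sin_ge_0 (- al) ltac:(lra) ltac:(lra)). rewrite sin_neg in *.
        rewrite Rabs_left1 by lra. reflexivity.
      - rewrite Rabs_right; [reflexivity|]. apply Rle_ge, sin_ge_0; lra. }
    apply sin_incr_0; try lra. rewrite Hsin.
    apply Rmult_le_reg_l with (r + h r); lra.
Qed.

Lemma Phi_onto_lower_half (x1 x2 : R) : 0 <= x1 <= 1 -> 0 <= x2 < 1/2 ->
  ~ (x1 = 1/2 /\ x2 = 0) ->
  exists p, 0 < fst p < 1/2 /\ -1 <= snd p <= 1 /\ Phi h p = (x1, x2).
Proof.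
  intros Hx1 Hx2 Hn.
  destruct (exists_arc_radius x1 x2 Hx1 Hx2 Hn) as [r [Hr Heq]].
  pose proof (h_nonneg r ltac:(lra)). pose proof (Theta_bounds r Hr).
  set (p := r + h r) in *. assert (Hp : 0 < p) by (unfold p; lra).
  set (y := (x1 - 1/2) / p).
  assert (Hyp : y * p = x1 - 1/2) by (unfold y; field; lra).
  assert (Hy2 : y ^ 2 <= 1).
  { apply Rmult_le_reg_r with (p ^ 2); [nra|]. rewrite <- Rpow_mult_distr, Hyp. nra. }
  assert (Hy : -1 <= y <= 1) by (split; nra).
  set (al := asin y).
  assert (Hsal : sin al = y) by (apply sin_asin, Hy).
  assert (Hcal : p * cos al = x2 + h r).
  { unfold al. rewrite cos_asin by exact Hy.
    rewrite <- (sqrt_pow2 p) by lra. rewrite <- sqrt_mult_alt by nra.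
    rewrite <- (sqrt_pow2 (x2 + h r)) by lra. f_equal. unfold Rsqr.
    replace (p ^ 2 * (1 - y * y)) with (p ^ 2 - (y * p) ^ 2) by ring. rewrite Hyp. lra. }
  assert (Hal : Rabs al <= Theta h r).
  { apply angle_le_Theta; [exact Hr|apply asin_bound| |]; fold p.
    - rewrite Hsal, Rmult_comm, Hyp. apply Rabs_le. lra.
    - lra. }
  exists (r, al / Theta h r). cbn [fst snd]. split; [lra|]. split.
  - apply Rabs_le_between. unfold Rdiv. rewrite Rabs_mult, (Rabs_right (/ Theta h r))
      by (apply Rle_ge, Rlt_le, Rinv_0_lt_compat; lra).
    apply Rmult_le_reg_r with (Theta h r); [lra|]. rewrite Rmult_assoc, Rinv_l by lra. lra.
  - unfold Phi. cbn [fst snd]. replace (al / Theta h r * Theta h r) with al by (field; lra).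
    fold p. rewrite Hsal, Hcal, Rmult_comm, Hyp. f_equal; ring.
Qed.

Lemma K_spec (x1 x2 : R) : 0 <= x1 <= 1 -> 0 <= x2 < 1/2 -> ~ (x1 = 1/2 /\ x2 = 0) ->
  0 < fst (K h (x1, x2)) < 1/2 /\ -1 <= snd (K h (x1, x2)) <= 1 /\ Phi h (K h (x1, x2)) = (x1, x2).
Proof.
  intros. unfold K.
  apply (epsilon_spec (inhabits (0, 0))
    (fun p => 0 < fst p < 1/2 /\ -1 <= snd p <= 1 /\ Phi h p = (x1, x2))).
  apply Phi_onto_lower_half; assumption.
Qed.

Variable M : R.
Hypothesis M_nonneg : 0 <= M.
Hypothesis h1_sq_le : forall r, 0 < r < 1/2 -> h1 r ^ 2 <= M * (r + h r) ^ 3.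

Definition C_weight : R := 1 + 2 * (2 + M * (r0 h + hr0) ^ 3 + 2 * M).

Lemma C_weight_ge_1 : 1 <= C_weight.
Proof.
  unfold C_weight. pose proof hr0_pos. destruct r0_spec as [Hr0 _].
  assert (0 <= M * (r0 h + hr0) ^ 3) by (apply Rmult_le_pos; [lra|apply pow_le; lra]). lra.
Qed.

Lemma h1_Theta_sq_le (r : R) : 0 < r < 1/2 ->
  h1 r * Theta h r ^ 2 <= 4 * (2 + M * (r0 h + hr0) ^ 3 + 2 * M).
Proof.
  intros Hr. pose proof (h1_nonneg r Hr). pose proof (h_nonneg r ltac:(lra)).
  pose proof (Theta_bounds r Hr). pose proof (Theta_le_2 r Hr).
  pose proof (h1_sq_le r Hr). pose proof hr0_pos. destruct r0_spec as [Hr0 _].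
  assert (0 <= M * (r0 h + hr0) ^ 3) by (apply Rmult_le_pos; [lra|apply pow_le; lra]).
  destruct (Rle_lt_dec r (r0 h)) as [Hle|Hgt].
  - assert (h r <= hr0) by (apply h_mono; lra).
    assert ((r + h r) ^ 3 <= (r0 h + hr0) ^ 3) by (apply pow_incr; lra).
    assert (h1 r ^ 2 <= M * (r0 h + hr0) ^ 3)
      by (eapply Rle_trans; [eassumption|apply Rmult_le_compat_l; lra]).
    assert (h1 r <= 1 + M * (r0 h + hr0) ^ 3) by nra.
    assert (Theta h r ^ 2 <= 4) by nra.
    apply Rle_trans with ((1 + M * (r0 h + hr0) ^ 3) * 4);
      [apply Rmult_le_compat; try lra; apply pow2_ge_0|lra].
  - (* here [h1 r * Theta^2 = (h1 r / (r + h r)^2) * ((r + h r) * Theta)^2] *)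
    destruct (Theta_gt_r0 r ltac:(lra)) as (_ & _ & Hrho & _).
    pose proof (arc_length_le_of_gt_r0 r ltac:(lra)).
    set (p := r + h r) in *.
    set (u := h1 r / p ^ 2).
    assert (Hu2 : u ^ 2 <= 2 * M).
    { apply Rmult_le_reg_r with (p ^ 4); [apply pow_lt; lra|].
      replace (u ^ 2 * p ^ 4) with (h1 r ^ 2) by (unfold u; field; lra).
      replace (2 * M * p ^ 4) with (M * p ^ 3 * (2 * p)) by ring.
      assert (0 <= M * p ^ 3) by (apply Rmult_le_pos; [lra|apply pow_le; lra]). nra. }
    assert (0 <= u) by (apply Rdiv_le_0_compat; [lra|apply pow_lt; lra]).
    assert (u <= 1 + 2 * M) by nra.
    replace (h1 r * Theta h r ^ 2) with (u * (p * Theta h r) ^ 2) by (unfold u; field; lra).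
    assert (0 <= p * Theta h r) by (apply Rmult_le_pos; lra).
    assert ((p * Theta h r) ^ 2 <= 4) by nra.
    nra.
Qed.

Lemma continuous_w (r t : R) : continuous (w h h1 r) t.
Proof.
  apply (ex_derive_continuous (K := R_AbsRing) (V := R_NormedModule)).
  unfold w. auto_derive. tauto.
Qed.

Lemma w_even (r t : R) : w h h1 r (- t) = w h h1 r t.
Proof.
  unfold w. replace (- t * Theta h r) with (- (t * Theta h r)) by ring. rewrite cos_neg. ring.
Qed.

Lemma w_ge_1 (r t : R) : 0 < r < 1/2 -> 1 <= w h h1 r t.
Proof.
  intros Hr. unfold w. pose proof (h1_nonneg r Hr). pose proof (COS_bound (t * Theta h r)). nra.
Qed.

Lemma w_le_C_weight (r t : R) : 0 < r < 1/2 -> -1 <= t <= 1 -> w h h1 r t <= C_weight.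
Proof.
  intros Hr Ht. unfold w, C_weight.
  pose proof (h1_nonneg r Hr). pose proof (h1_Theta_sq_le r Hr).
  pose proof (one_minus_cos_le (t * Theta h r)).
  assert ((t * Theta h r) ^ 2 <= Theta h r ^ 2)
    by (rewrite Rpow_mult_distr; assert (t ^ 2 <= 1) by nra;
        pose proof (pow2_ge_0 (Theta h r)); nra).
  assert (h1 r * (1 - cos (t * Theta h r)) <= h1 r * (Theta h r ^ 2 / 2))
    by (apply Rmult_le_compat_l; lra).
  nra.
Qed.

Lemma g_spec (delta r t : R) : -1 < delta < 1 -> 0 < r < 1/2 -> -1 <= t <= 1 ->
  reparam_spec (w h h1 r) delta t (g h h1 delta r t).
Proof.
  intros Hd Hr Ht. unfold g.
  apply (epsilon_spec (inhabits 0) (fun m => reparam_spec (w h h1 r) delta t m)).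
  apply (reparam_exists _ C_weight); auto using continuous_w, w_even, w_ge_1, w_le_C_weight.
Qed.

Lemma Phi_g_displacement (delta r t : R) : -1 < delta < 1 -> 0 < r < 1/2 -> -1 <= t <= 1 ->
  dist2 (Phi h (r, g h h1 delta r t)) (Phi h (r, t))
    <= C_weight * C_corner * Rabs delta * dcorner (Phi h (r, t)).
Proof.
  intros Hd Hr Ht. pose proof (h_nonneg r ltac:(lra)). pose proof (Theta_bounds r Hr).
  pose proof (Rabs_pos delta). pose proof C_weight_ge_1.
  assert (Hg : Rabs (g h h1 delta r t - t) <= Rabs delta * C_weight * (1 - Rabs t))
    by (apply (reparam_displacement (w h h1 r));
        auto using continuous_w, w_ge_1, w_le_C_weight, g_spec).
  pose proof (arc_length_le_dcorner r t Hr Ht).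
  assert (0 <= (r + h r) * Theta h r) by (apply Rmult_le_pos; lra).
  eapply Rle_trans; [apply Phi_chord_le; lra|].
  eapply Rle_trans; [apply Rmult_le_compat_l; [assumption|exact Hg]|].
  replace ((r + h r) * Theta h r * (Rabs delta * C_weight * (1 - Rabs t)))
    with (Rabs delta * C_weight * ((r + h r) * Theta h r * (1 - Rabs t))) by ring.
  replace (C_weight * C_corner * Rabs delta * dcorner (Phi h (r, t)))
    with (Rabs delta * C_weight * (C_corner * dcorner (Phi h (r, t)))) by ring.
  apply Rmult_le_compat_l; [nra|assumption].
Qed.

Lemma PsiL_displacement (delta x1 x2 : R) : -1 < delta < 1 -> 0 <= x1 <= 1 -> 0 <= x2 < 1/2 ->
  dist2 (PsiL h h1 delta (x1, x2)) (x1, x2) <= C_weight * C_corner * Rabs delta * dcorner (x1, x2).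
Proof.
  intros Hd Hx1 Hx2.
  assert (Harc : ~ (x1 = 1/2 /\ x2 = 0) ->
    dist2 (Phi h (fst (K h (x1, x2)), g h h1 delta (fst (K h (x1, x2))) (snd (K h (x1, x2)))))
      (x1, x2) <= C_weight * C_corner * Rabs delta * dcorner (x1, x2)).
  { intros Hn. destruct (K_spec x1 x2 Hx1 Hx2 Hn) as (Hr & Ht & HK).
    destruct (K h (x1, x2)) as [r t]. cbn [fst snd] in *. rewrite <- HK.
    apply Phi_g_displacement; assumption. }
  unfold PsiL. cbn [fst snd].
  destruct (Req_EM_T x1 (1/2)) as [E1|E1]; [destruct (Req_EM_T x2 0) as [E2|E2]|].
  - subst. unfold dist2. cbn [fst snd].
    replace ((1/2 - 1/2) ^ 2 + (0 - 0) ^ 2) with 0 by ring. rewrite sqrt_0.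
    pose proof C_weight_ge_1. pose proof C_corner_ge_1.
    pose proof (Rabs_pos delta). pose proof (dcorner_nonneg (1/2, 0)).
    apply Rmult_le_pos; [|lra]. apply Rmult_le_pos; [nra|lra].
  - apply Harc. intros [_ E]. contradiction.
  - apply Harc. intros [E _]. contradiction.
Qed.

End ArcCoordinates.

Lemma dist2_same_snd (a b c : R) : dist2 (a, c) (b, c) = Rabs (a - b).
Proof.
  unfold dist2. cbn [fst snd]. rewrite <- sqrt_Rsqr_abs, Rsqr_pow2. f_equal. ring.
Qed.

Lemma dist2_reflect2 (a b x1 x2 : R) : dist2 (a, 1 - b) (x1, x2) = dist2 (a, b) (x1, 1 - x2).
Proof. unfold dist2. cbn [fst snd]. f_equal. ring. Qed.

Lemma Psi_midline_displacement (h h1 : R -> R) (delta x1 : R) : 0 <= x1 <= 1 ->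
  dist2 (Psi h h1 delta (x1, 1/2)) (x1, 1/2) <= Rabs delta * dcorner (x1, 1/2).
Proof.
  intros Hx. pose proof (dcorner_midline x1). pose proof (Rabs_pos delta).
  unfold Psi. cbn [fst snd]. destruct (Req_EM_T (1/2) (1/2)) as [_|]; [|lra].
  apply Rle_trans with (Rabs delta * (1/2)); [|apply Rmult_le_compat_l; lra].
  destruct (Rle_dec x1 (1/2)); rewrite dist2_same_snd.
  - replace ((1 + delta) * x1 - x1) with (delta * x1) by ring.
    rewrite Rabs_mult, (Rabs_right x1) by lra. apply Rmult_le_compat_l; lra.
  - replace ((1 + delta) / 2 + (1 - delta) * (x1 - 1/2) - x1) with (delta * (1 - x1)) by field.
    rewrite Rabs_mult, (Rabs_right (1 - x1)) by lra. apply Rmult_le_compat_l; lra.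
Qed.

Lemma Psi_lower_half (h h1 : R -> R) (delta x1 x2 : R) : x2 < 1/2 ->
  Psi h h1 delta (x1, x2) = PsiL h h1 delta (x1, x2).
Proof.
  intros Hx. unfold Psi. cbn [fst snd].
  destruct (Req_EM_T x2 (1/2)); [lra|]. destruct (Rlt_dec (1/2) x2); [lra|reflexivity].
Qed.

Lemma Psi_upper_half (h h1 : R -> R) (delta x1 x2 : R) : 1/2 < x2 ->
  Psi h h1 delta (x1, x2) =
  (fst (PsiL h h1 delta (x1, 1 - x2)), 1 - snd (PsiL h h1 delta (x1, 1 - x2))).
Proof.
  intros Hx. unfold Psi. cbn [fst snd].
  destruct (Req_EM_T x2 (1/2)); [lra|]. destruct (Rlt_dec (1/2) x2); [reflexivity|lra].
Qed.

Theorem proposition2p6 (h h1 h2 h3 : R -> R)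
  (Hnonneg : forall r, 0 <= r < 1/2 -> 0 <= h r)
  (Hmono : forall r s, 0 <= r -> r <= s -> s < 1/2 -> h r <= h s)
  (Hzero : forall r, 0 <= r <= 1/10 -> h r = 0)
  (Hinf : forall M, exists eps, 0 < eps /\
            forall r, 1/2 - eps < r < 1/2 -> M < h r)
  (Hd1 : forall r, 0 < r < 1/2 -> derivable_pt_lim h r (h1 r))
  (Hd2 : forall r, 0 < r < 1/2 -> derivable_pt_lim h1 r (h2 r))
  (Hd3 : forall r, 0 < r < 1/2 -> derivable_pt_lim h2 r (h3 r))
  (Hc3 : forall r, 0 < r < 1/2 -> continuity_pt h3 r)
  (HO1 : exists M, forall r, 0 < r < 1/2 -> (h1 r) ^ 2 <= M * (r + h r) ^ 3)
  (HO2 : exists M, forall r, 0 < r < 1/2 ->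
            Rabs (h2 r * h1 r) <= M * (r + h r) ^ 3)
  (HO3 : exists M, forall r, 0 < r < 1/2 -> Rabs (h3 r) <= M * (r + h r) ^ 2) :
  exists C, 0 < C /\
    forall delta, -1 < delta < 1 ->
    forall x1 x2, 0 <= x1 <= 1 -> 0 <= x2 <= 1 ->
      dist2 (Psi h h1 delta (x1, x2)) (x1, x2)
        <= C * Rabs delta * dcorner (x1, x2).
Proof.
  destruct HO1 as [M0 HM0].
  assert (HM : forall r, 0 < r < 1/2 -> h1 r ^ 2 <= Rabs M0 * (r + h r) ^ 3).
  { intros r Hr. eapply Rle_trans; [apply HM0, Hr|]. apply Rmult_le_compat_r; [|apply Rle_abs].
    apply pow_le. pose proof (Hnonneg r ltac:(lra)). lra. }
  pose proof (C_weight_ge_1 h h1 Hzero Hinf Hd1 (Rabs M0) (Rabs_pos M0)).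
  pose proof (C_corner_ge_1 h h1 Hzero Hinf Hd1).
  assert (HC : 1 <= C_weight h (Rabs M0) * C_corner h) by nra.
  exists (C_weight h (Rabs M0) * C_corner h). split; [lra|].
  intros delta Hd x1 x2 Hx1 Hx2.
  assert (0 <= Rabs delta * dcorner (x1, x2))
    by (apply Rmult_le_pos; [apply Rabs_pos|apply dcorner_nonneg]).
  destruct (Rtotal_order x2 (1/2)) as [Hlow|[->|Hup]].
  - rewrite Psi_lower_half by exact Hlow.
    apply PsiL_displacement; auto using Rabs_pos; lra.
  - eapply Rle_trans; [apply Psi_midline_displacement, Hx1|]. rewrite Rmult_assoc. nra.
  - rewrite Psi_upper_half, dist2_reflect2, <- surjective_pairing, <- dcorner_reflect2 by exact Hup.
    apply PsiL_displacement; auto using Rabs_pos; lra.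
Qed.
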